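(* Let $\mathcal{U}$ be a finite set of submitted data units, each with a submitted identity, let $e_\theta$ be an evidence function whose graph on $\mathcal{U}$ has connected components (clusters) $C_1,\dots,C_K$, let $R_\theta$ be a cluster representative operator, and let $\bar v_\theta$ be the resulting quotient game on $[K]$. Let the quotient semivalue attribution pay submitted identity $i$ the amount $p_i^{Q,\omega}(S)=\sum_{k=1}^K a_{i,k}\,\varphi_k^\omega(\bar v_\theta)$ with within-cluster shares $a_{i,k}\in[0,1]$, $\sum_i a_{i,k}=1$. Suppose a manipulation $\alpha$ by latent provider $i$, replacing identity $i$ by pseudonyms $I_i^\alpha$ and producing profile $S^\alpha$ with quotient game $\bar v_\theta^\alpha$ and shares $a^\alpha_{j,k}$, is quotient-stable, and the within-cluster allocation rule is false-name-neutral. Then for any semivalue weights $\omega$ and any value function $\bar v_\theta$, the additive false-name gain \[\Gamma_i=\sum_{j\in I_i^\alpha}p_j^{Q,\omega}(S^\alpha)-p_i^{Q,\omega}(S)\] equals $0$; that is, quotient semivalue attribution is exactly false-name-proof against $\alpha$.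
   Context: Evidence function: $e_\theta(u,u')\in\{0,1\}$; the graph $G_\theta$ on $\mathcal{U}$ has an edge between $u,u'$ iff $e_\theta(u,u')=1$, and its connected components $C_1,\dots,C_K$ are the attribution clusters. A cluster representative $R_\theta$ maps each cluster to a multiset of canonical training units (e.g., collapsing exact duplicates). The quotient game is $\bar v_\theta(Q)=U(A(\bigcup_{k\in Q}R_\theta(C_k)))-U(A(\emptyset))$ for $Q\subseteq[K]$, where $A$ is a learner mapping a multiset of training examples to a model and $U$ is a utility. Semivalue: $\varphi_k^\omega(w)=\sum_{Q\subseteq[K]\setminus\{k\}}\omega_{K,|Q|}[w(Q\cup\{k\})-w(Q)]$ with $\omega_{K,s}\ge0$, $\sum_s\binom{K-1}{s}\omega_{K,s}=1$. Quotient-stable: the manipulation leaves (a) the set of clusters unchanged up to relabelling of cluster ids and (b) each representative $R_\theta(C_k)$ unchanged as a multiset of canonical training units. False-name-neutral: for every cluster $k$, $\sum_{j\in I_i^\alpha}a^\alpha_{j,k}=a_{i,k}$ (simultaneously for all $k$). *)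

From HB Require Import structures.
From mathcomp Require Import all_boot all_order all_algebra.
Set Implicit Arguments. Unset Strict Implicit. Unset Printing Implicit Defensive.
Import Order.TTheory GRing.Theory Num.Theory.
Local Open Scope ring_scope.

Definition evidence_graph (W : finType) (e : rel W) (S : {set W}) : rel W :=
  [rel x y | [&& x \in S, y \in S & e x y || e y x]].

Definition clusters (W : finType) (e : rel W) (S : {set W}) : {set {set W}} :=
  [set [set y | connect (evidence_graph e S) x y] | x in S].

Definition cluster_labelling (W : finType) (e : rel W) (S : {set W})
    (K : nat) (C : 'I_K -> {set W}) : Prop :=
  injective C /\ forall A : {set W}, A \in clusters e S <-> exists k, C k = A.

(* Quotient game: vbar(Q) = U(A(U_{k in Q} R(C_k))) - U(A(emptyset)).
   UA : seq D -> R is the composite U o A applied to a multiset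
   (represented by a sequence; UA is assumed permutation invariant). *)
Definition quotient_game (R : ringType) (W : finType) (D : Type)
    (K : nat) (C : 'I_K -> {set W}) (Rep : {set W} -> seq D)
    (UA : seq D -> R) (Q : {set 'I_K}) : R :=
  UA (flatten [seq Rep (C k) | k <- enum Q]) - UA [::].

Definition semivalue_weights (R : numDomainType) (omega : nat -> nat -> R) : Prop :=
  forall K : nat, (forall s, 0 <= omega K s) /\
    ((0 < K)%N -> \sum_(s < K) ('C(K.-1, s))%:R * omega K s = 1).

Definition semivalue (R : ringType) (K : nat) (omega : nat -> nat -> R)
    (w : {set 'I_K} -> R) (k : 'I_K) : R :=
  \sum_(Q : {set 'I_K} | k \notin Q) omega K #|Q| * (w (k |: Q) - w Q).

Definition payment (R : ringType) (Id : finType) (K : nat)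
    (a : Id -> 'I_K -> R) (omega : nat -> nat -> R)
    (vbar : {set 'I_K} -> R) (i : Id) : R :=
  \sum_(k < K) a i k * semivalue omega vbar k.

Definition valid_shares (R : numDomainType) (Id : finType) (K : nat)
    (a : Id -> 'I_K -> R) : Prop :=
  (forall i k, 0 <= a i k <= 1) /\ (forall k, \sum_(i : Id) a i k = 1).

From HB Require Import structures.
From mathcomp Require Import all_boot all_order all_algebra.
Import Order.TTheory GRing.Theory Num.Theory.
Local Open Scope ring_scope.

(* Quotient-stability makes the two cluster labellings differ by a bijection
   h : [K] -> [K'], and the two quotient games correspond under h.  Semivalues
   are covariant under relabelling of the players, so the value of cluster k
   in the original game equals that of h k in the manipulated one.  The gain
   of the pseudonyms is then sum_k (sum_(j in I) a'_(j,h k) - a_(i,k)) phi_k,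
   which vanishes term by term by false-name neutrality. *)

Lemma perm_flatten_map (I : Type) (T : eqType) (s : seq I) (f g : I -> seq T) :
  (forall x, perm_eq (f x) (g x)) ->
  perm_eq (flatten (map f s)) (flatten (map g s)).
Proof. by move=> fg; elim: s => //= x s IHs; apply: perm_cat. Qed.

Lemma perm_enum_imset {T T' : finType} {f : T -> T'} (A : {set T}) :
  injective f -> perm_eq (enum (f @: A)) (map f (enum A)).
Proof.
move=> f_inj; apply: uniq_perm; rewrite ?enum_uniq ?map_inj_uniq ?enum_uniq //.
move=> y; rewrite mem_enum; apply/imsetP/mapP => -[x xA ->]; exists x => //;
  by move: xA; rewrite mem_enum.
Qed.

Lemma relabelling_exists (T : eqType) (I J : finType) (f : I -> T) (g : J -> T) :
  injective f -> injective g ->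
  (forall x, (exists i, f i = x) <-> (exists j, g j = x)) ->
  exists2 h : I -> J, bijective h & forall i, g (h i) = f i.
Proof.
move=> f_inj g_inj same_range.
have to_g i : exists j, g j == f i.
  by have [|j gj] := (same_range (f i)).1; [exists i | exists j; apply/eqP].
have to_f j : exists i, f i == g j.
  by have [|i fi] := (same_range (g j)).2; [exists j | exists i; apply/eqP].
pose h i := xchoose (to_g i); pose h' j := xchoose (to_f j).
have hP i : g (h i) = f i by apply/eqP/(xchooseP (to_g i)).
have h'P j : f (h' j) = g j by apply/eqP/(xchooseP (to_f j)).
exists h => //; exists h' => [i | j].
- by apply: f_inj; rewrite h'P hP.
- by apply: g_inj; rewrite hP h'P.
Qed.

Lemma cluster_relabelling {W : finType} {e : rel W} {S S' : {set W}}
    {K K' : nat} {C : 'I_K -> {set W}} {C' : 'I_K' -> {set W}} :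
  cluster_labelling e S C -> cluster_labelling e S' C' ->
  clusters e S = clusters e S' ->
  exists2 h : 'I_K -> 'I_K', bijective h & forall k, C' (h k) = C k.
Proof.
move=> [C_inj C_onto] [C'_inj C'_onto] same_clusters.
apply: relabelling_exists => // A.
have := C_onto A; have := C'_onto A; rewrite same_clusters.
by move=> C'_iff C_iff; apply: iff_trans C'_iff; apply: iff_sym.
Qed.

Lemma quotient_game_relabel {R : ringType} {W : finType} {D : eqType}
    {K K' : nat} {C : 'I_K -> {set W}} {C' : 'I_K' -> {set W}}
    {Rep Rep' : {set W} -> seq D} {UA : seq D -> R} {h : 'I_K -> 'I_K'} :
  (forall s t : seq D, perm_eq s t -> UA s = UA t) -> injective h ->
  (forall k, perm_eq (Rep (C k)) (Rep' (C' (h k)))) ->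
  forall Q : {set 'I_K}, quotient_game C' Rep' UA (h @: Q) = quotient_game C Rep UA Q.
Proof.
move=> UA_perm h_inj same_rep Q; rewrite /quotient_game; congr (_ - _).
apply/UA_perm/(perm_trans (perm_flatten (perm_map _ (perm_enum_imset Q h_inj)))).
by rewrite -map_comp perm_sym; apply: perm_flatten_map.
Qed.

Lemma semivalue_relabel {R : ringType} {K K' : nat} (omega : nat -> nat -> R)
    {w : {set 'I_K} -> R} {w' : {set 'I_K'} -> R} {h : 'I_K -> 'I_K'} :
  bijective h -> (forall Q : {set 'I_K}, w' (h @: Q) = w Q) ->
  forall k, semivalue omega w' (h k) = semivalue omega w k.
Proof.
move=> [h' hK h'K] w_relabel k.
have K'_eq_K : K' = K.
  by rewrite -[K]card_ord -[K']card_ord (bij_eq_card (Bijective hK h'K)).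
have imset_bij : bijective (fun Q : {set 'I_K} => (h @: Q : {set 'I_K'})).
  exists (fun Q : {set 'I_K'} => (h' @: Q : {set 'I_K})) => Q.
  - by rewrite -imset_comp (eq_imset _ hK) imset_id.
  - by rewrite -imset_comp (eq_imset _ h'K) imset_id.
rewrite /semivalue (reindex _ (onW_bij _ imset_bij)).
apply: eq_big => [Q | Q _]; first by rewrite mem_imset //; apply: can_inj hK.
by rewrite -imsetU1 !w_relabel card_imset ?K'_eq_K //; apply: can_inj hK.
Qed.

Lemma sum_payment (R : ringType) (Id : finType) (K : nat)
    (a : Id -> 'I_K -> R) (omega : nat -> nat -> R) (w : {set 'I_K} -> R)
    (I : {set Id}) :
  \sum_(j in I) payment a omega w j
    = \sum_(k < K) (\sum_(j in I) a j k) * semivalue omega w k.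
Proof.
rewrite /payment exchange_big; apply: eq_bigr => k _.
by rewrite mulr_suml.
Qed.

Theorem theorem2
  (R : realFieldType) (W : finType) (D : eqType) (Id : finType)
  (e : rel W) (UA : seq D -> R)
  (HUA : forall s t : seq D, perm_eq s t -> UA s = UA t)
  (omega : nat -> nat -> R) (Homega : semivalue_weights omega)
  (* original profile S *)
  (S : {set W}) (K : nat) (C : 'I_K -> {set W}) (Rep : {set W} -> seq D)
  (a : Id -> 'I_K -> R)
  (HC : cluster_labelling e S C) (Ha : valid_shares a)
  (* manipulated profile S^alpha *)
  (S' : {set W}) (K' : nat) (C' : 'I_K' -> {set W}) (Rep' : {set W} -> seq D)
  (a' : Id -> 'I_K' -> R)
  (HC' : cluster_labelling e S' C') (Ha' : valid_shares a')
  (* the manipulating provider and its pseudonyms *)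
  (i : Id) (I : {set Id})
  (* quotient-stability: (a) same clusters, (b) same representatives *)
  (Hstab_a : clusters e S = clusters e S')
  (Hstab_b : forall A, A \in clusters e S -> perm_eq (Rep A) (Rep' A))
  (* false-name neutrality, for every cluster (matched across relabelling) *)
  (Hfnn : forall (k : 'I_K) (k' : 'I_K'), C k = C' k' ->
            \sum_(j in I) a' j k' = a i k) :
  \sum_(j in I) payment a' omega (quotient_game C' Rep' UA) j
    - payment a omega (quotient_game C Rep UA) i = 0.
Proof.
have [h h_bij relabel_C] := cluster_relabelling HC HC' Hstab_a.
have same_rep k : perm_eq (Rep (C k)) (Rep' (C' (h k))).
  by rewrite relabel_C; apply/Hstab_b/HC.2; exists k.
have game_relabel := quotient_game_relabel (Rep:=Rep) (Rep':=Rep')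
  HUA (bij_inj h_bij) same_rep.
rewrite sum_payment (reindex h (onW_bij _ h_bij)) /payment -sumrB big1 // => k _.
rewrite (semivalue_relabel _ h_bij game_relabel).
by rewrite (Hfnn k (h k) (esym (relabel_C k))) subrr.
Qed.
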